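(* Let $F$ be a field of characteristic zero. Let $N\ge0$ and let $\{d_s\}_{s\ge N}\subseteq\mathbb{N}$, $\{\tau_s\}_{s\ge N}\subseteq\mathbb{N}$ be fixed. Suppose a family of elements $\beta^s_i\in F$ ($s\ge N$, $i\ge\tau_s$) satisfies $$\beta^n_m\beta^s_t=\beta^n_m\beta^s_{m+t+d_n}+\beta^s_t\beta^n_{m+t+d_s}\quad\text{for all } n,s\ge N,\ m\ge\tau_n,\ t\ge\tau_s.$$ Then either $\beta^s_t=0$ for all $s\ge N$, $t\ge\tau_s$, or there exist a set $I\subseteq\mathbb{N}$ and integers $\Delta$, $\{k_i\}_{i\in I}$ with $\beta^i_{k_i}\ne0$, $0\le k_i-\tau_i<\Delta\le k_i+d_i$ and $\Delta\mid k_i+d_i$ for $i\in I$, such that for all $s\ge N$, $t\ge\tau_s$: $$\beta^s_t=\begin{cases}\dfrac{(k_s+d_s)\beta^s_{k_s}}{k_s+d_s+\Delta l}, & s\in I,\ t=k_s+\Delta l,\ l\ge0,\\ 0,&\text{otherwise}.\end{cases}$$ In particular, if $d_s=\tau_s=0$ for all $s$, then $\beta^s_t=0$ for all $s\ge N$, $t\ge\tau_s$.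
   Context: $\mathbb{N}$ includes $0$. The notation $\beta^s_t$ denotes an element indexed by two indices $s$ and $t$; the superscript is not a power. *)

From HB Require Import structures.
From mathcomp Require Import all_boot all_order all_algebra.
Set Implicit Arguments. Unset Strict Implicit. Unset Printing Implicit Defensive.
Import Order.TTheory GRing.Theory Num.Theory.

(* With [w = t + d s] and [f_s w := beta s t], the hypothesis reads
     f_n(x) f_s(y) = f_n(x) f_s(x + y) + f_s(y) f_n(x + y)
   for [x >= tau n + d n] and [y >= tau s + d s].  For [n = s] it shows that the
   support of [f_s] is closed under addition and that [1/f_s] is additive on it,
   so that [w * f_s(w)] is constant there.  For arbitrary [n, s], if [x] lies in
   the support of [f_n] and [x + y] in that of [f_s], then [y] lies in the support
   of [f_s].  Hence each nonempty support is the set of all multiples of a period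
   above its threshold [tau s + d s], and the period is the same for all [s]. *)

From HB Require Import structures.
From mathcomp Require Import all_boot all_order all_algebra zify ring.
From Stdlib Require Import Classical Wf_nat.
Import GRing.Theory.

Set Implicit Arguments.
Unset Strict Implicit.
Unset Printing Implicit Defensive.

Section PeriodicSupport.

Variables (A : pred nat) (sg : nat).
Hypotheses (A_add : forall x y, A x -> A y -> A (x + y))
  (A_subl : forall x y, A x -> sg <= y -> A (x + y) -> A y)
  (notA0 : ~~ A 0).

Definition is_period d := forall w, sg <= w -> A w = A (w + d).

Lemma mem_gt0 x : A x -> 0 < x.
Proof. by case: x notA0 => // /negbTE ->. Qed.

Lemma mem_mulSn x m : A x -> A (x * m.+1).
Proof. by move=> Ax; elim: m => [|m IHm]; rewrite ?muln1 // mulnS A_add. Qed.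

Lemma period_mem x : A x -> is_period x.
Proof.
move=> Ax w le_sg_w; apply/idP/idP => [Aw | Awx]; first exact: A_add.
by apply: (A_subl Ax); rewrite // addnC.
Qed.

Lemma periodB d1 d2 : is_period d1 -> is_period d2 -> d2 <= d1 -> is_period (d1 - d2).
Proof.
move=> per1 per2 le21 w le_sg_w.
rewrite (per2 (w + (d1 - d2))) ?(leq_trans le_sg_w (leq_addr _ _)) //.
by rewrite -addnA subnK // -per1.
Qed.

Lemma periodMn d m : is_period d -> is_period (d * m).
Proof.
move=> perd; elim: m => [|m IHm] w le_sg_w; first by rewrite muln0 addn0.
rewrite mulnS (addnC d) addnA -perd; first exact: IHm.
exact: leq_trans le_sg_w (leq_addr _ _).
Qed.

(* [D] is the least positive period: every period, in particular every
   element of [A], is a multiple of it. *)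
Lemma periodic_support a : A a ->
  exists2 D, 0 < D & forall w, sg <= w -> A w = (D %| w).
Proof.
move=> Aa; have sg_gt0 : 0 < sg.
  by case: sg A_subl => // A_sub0; move: notA0; rewrite (A_sub0 a 0) ?addn0.
have [D [[[D_gt0 perD] minD] _]] := dec_inh_nat_subset_has_unique_least_element
  (fun d => 0 < d /\ is_period d) (fun d => classic _)
  (ex_intro _ a (conj (mem_gt0 Aa) (period_mem Aa))).
have dvdD d : is_period d -> D %| d.
  move=> perd; rewrite /dvdn; case: (posnP (d %% D)) => [// | rem_gt0].
  have perRem : is_period (d %% D).
    have -> : d %% D = d - D * (d %/ D) by rewrite {2}(divn_eq d D) mulnC addKn.
    by apply: periodB => //; [exact: periodMn | rewrite mulnC leq_divM].
  by move/leP: (minD _ (conj rem_gt0 perRem)); rewrite leqNgt ltn_pmod.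
exists D => // w le_sg_w; apply/idP/idP => [/period_mem/dvdD // | /dvdnP[m def_w]].
rewrite def_w in le_sg_w *.
have [p def_a] := dvdnP (dvdD _ (period_mem Aa)).
have m_gt0 : 0 < m by move: (leq_trans sg_gt0 le_sg_w); rewrite muln_gt0 => /andP[].
have p_gt0 : 0 < p by move: (mem_gt0 Aa); rewrite def_a muln_gt0 => /andP[].
rewrite (periodMn (p * m - m) perD) //; have -> : m * D + D * (p * m - m) = a * m.
  by rewrite def_a mulnC -mulnDr subnKC ?leq_pmull // mulnA (mulnC D).
by case: m m_gt0 {def_w le_sg_w} => // m _; apply: mem_mulSn.
Qed.

End PeriodicSupport.

Lemma support_period_dvdn (A1 A2 : pred nat) (s1 s2 D1 D2 : nat) :
    0 < D1 -> 0 < D2 ->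
    (forall w, s1 <= w -> A1 w = (D1 %| w)) ->
    (forall w, s2 <= w -> A2 w = (D2 %| w)) ->
    (forall x y, A1 x -> s2 <= y -> A2 (x + y) -> A2 y) ->
  D2 %| D1.
Proof.
move=> D1_gt0 D2_gt0 A1E A2E A12.
(* [x] lies in [A1], and [D2 %| x] forces [D2 %| D1]. *)
pose x := D1 * (D2 * s1).+1; pose y := D2 * (x + s2) - x.
have le_s1x : s1 <= x by apply: leq_trans (leq_pmull _ D1_gt0); nia.
have le_xy : x + s2 <= D2 * (x + s2) by apply: leq_pmull.
have le_s2y : s2 <= y by rewrite /y; lia.
have def_xy : x + y = D2 * (x + s2) by rewrite /y; lia.
have A2y : A2 y.
  by apply: (A12 x); rewrite ?A1E ?A2E ?def_xy ?dvdn_mulr //; lia.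
have D2_y : D2 %| y by rewrite -A2E.
have : D2 %| x by rewrite -(dvdn_addl x D2_y) def_xy dvdn_mulr.
by rewrite /x mulnS dvdn_addl // mulnCA dvdn_mulr.
Qed.

Definition roundup (D x : nat) := (x + D.-1) %/ D * D.

Section Roundup.

Variables (D x : nat).
Hypothesis D_gt0 : 0 < D.

Lemma dvdn_roundup : D %| roundup D x.
Proof. exact: dvdn_mull. Qed.

Lemma leq_roundup : x <= roundup D x.
Proof. rewrite /roundup; nia. Qed.

Lemma roundup_ltn : roundup D x < x + D.
Proof. rewrite /roundup; nia. Qed.

Lemma roundup_progression w : x <= w -> D %| w -> exists l, w = roundup D x + D * l.
Proof.
move=> le_xw /dvdnP[m def_w]; exists (m - (x + D.-1) %/ D).
have : (x + D.-1) %/ D < m.+1 by rewrite ltn_divLR //; lia.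
by rewrite def_w /roundup (mulnC D) -mulnDl ltnS => /subnKC ->.
Qed.

End Roundup.

Local Open Scope ring_scope.

Section InverseAdditive.

Variables (F : fieldType) (f : nat -> F) (sg : nat).
Hypothesis f_rel : forall x y, (sg <= x)%N -> (sg <= y)%N ->
  f x * f y = f x * f (x + y)%N + f y * f (x + y)%N.

Lemma f0_eq0 : sg = 0%N -> f 0%N = 0.
Proof.
move=> sg0; have := f_rel (x := 0) (y := 0); rewrite sg0 addn0 -{1}[_ * _]addr0.
by move=> /(_ isT isT)/addrI/esym/eqP; rewrite mulf_eq0 orbb => /eqP.
Qed.

Lemma f_add_neq0 x y : (sg <= x)%N -> (sg <= y)%N -> f x != 0 -> f y != 0 ->
  f (x + y)%N != 0.
Proof.
move=> le_x le_y fx_neq0 fy_neq0.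
apply: contra_neq (mulf_neq0 fx_neq0 fy_neq0) => fxy0.
by rewrite f_rel // fxy0 !mulr0 addr0.
Qed.

Lemma invf_add x y : (sg <= x)%N -> (sg <= y)%N -> f x != 0 -> f y != 0 ->
  (f (x + y)%N)^-1 = (f x)^-1 + (f y)^-1.
Proof.
move=> le_x le_y fx_neq0 fy_neq0.
have fxy_neq0 := f_add_neq0 le_x le_y fx_neq0 fy_neq0.
have sum_neq0 : f x + f y != 0.
  apply: contra_neq (mulf_neq0 fx_neq0 fy_neq0) => sum0.
  by rewrite f_rel // -mulrDl sum0 mul0r.
have -> : f (x + y)%N = f x * f y / (f x + f y).
  by rewrite f_rel // -mulrDl (mulrC _ (f (x + y)%N)) mulfK.
by field; rewrite fx_neq0 fy_neq0 sum_neq0.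
Qed.

Lemma f_mulSn_neq0 u j : (sg <= u)%N -> f u != 0 -> f (u * j.+1)%N != 0.
Proof.
move=> le_u fu_neq0; elim: j => [|j IHj]; first by rewrite muln1.
by rewrite mulnS f_add_neq0 // (leq_trans le_u) ?leq_pmulr.
Qed.

Lemma invf_mulSn u j : (sg <= u)%N -> f u != 0 ->
  (f (u * j.+1)%N)^-1 = j.+1%:R * (f u)^-1.
Proof.
move=> le_u fu_neq0; elim: j => [|j IHj]; first by rewrite muln1 mul1r.
rewrite mulnS invf_add ?f_mulSn_neq0 ?(leq_trans le_u) ?leq_pmulr // IHj.
by rewrite -addn1 natrD; ring.
Qed.

(* Both sides equal [(u * v)%:R * f (u * v)]. *)
Lemma natr_mul_f_const u v : (sg <= u)%N -> (sg <= v)%N -> f u != 0 -> f v != 0 ->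
  u%:R * f u = v%:R * f v.
Proof.
move=> le_u le_v fu_neq0 fv_neq0.
have supp_gt0 (w : nat) : (sg <= w)%N -> f w != 0 -> (0 < w)%N.
  by case: w => // /[!leqn0] /eqP/f0_eq0 ->; rewrite eqxx.
case: u le_u fu_neq0 (supp_gt0 u le_u fu_neq0) => // u le_u fu_neq0 _.
case: v le_v fv_neq0 (supp_gt0 v le_v fv_neq0) => // v le_v fv_neq0 _.
have := invf_mulSn v le_u fu_neq0; rewrite mulnC invf_mulSn //.
move/(congr1 (fun z => z * f u.+1 * f v.+1)).
by rewrite mulrAC !divfK.
Qed.

End InverseAdditive.

Section ShiftedRelation.

Variables (F : fieldType) (N : nat) (d tau : nat -> nat) (beta : nat -> nat -> F).
Hypothesis hrel : forall n s m t : nat, (N <= n)%N -> (N <= s)%N ->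
  (tau n <= m)%N -> (tau s <= t)%N ->
  beta n m * beta s t =
    beta n m * beta s (m + t + d n)%N + beta s t * beta n (m + t + d s)%N.

Definition supp_lb s := (tau s + d s)%N.

Definition beta_shift s w := beta s (w - d s)%N.

Definition supp s w := (supp_lb s <= w)%N && (beta_shift s w != 0).

Lemma beta_shift_rel n s : (N <= n)%N -> (N <= s)%N ->
  forall x y, (supp_lb n <= x)%N -> (supp_lb s <= y)%N ->
  beta_shift n x * beta_shift s y =
    beta_shift n x * beta_shift s (x + y)%N + beta_shift s y * beta_shift n (x + y)%N.
Proof.
rewrite /supp_lb /beta_shift => le_Nn le_Ns x y le_x le_y.
have -> : (x + y - d s = x - d n + (y - d s) + d n)%N by lia.
have -> : (x + y - d n = x - d n + (y - d s) + d s)%N by lia.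
by apply: hrel => //; lia.
Qed.

Lemma supp_addn_d s t : (tau s <= t)%N -> supp s (t + d s)%N = (beta s t != 0).
Proof. by move=> le_t; rewrite /supp /beta_shift addnK leq_add2r le_t. Qed.

Lemma supp_subl n s : (N <= n)%N -> (N <= s)%N -> forall x y,
  supp n x -> (supp_lb s <= y)%N -> supp s (x + y)%N -> supp s y.
Proof.
move=> le_Nn le_Ns x y /andP[le_x fx_neq0] le_y /andP[_ fxy_neq0]; rewrite /supp le_y /=.
apply: contra_neq (mulf_neq0 fx_neq0 fxy_neq0) => fy0.
by have := beta_shift_rel le_Nn le_Ns le_x le_y; rewrite fy0 !mulr0 mul0r addr0.
Qed.

Lemma supp_add s : (N <= s)%N -> forall x y, supp s x -> supp s y -> supp s (x + y)%N.
Proof.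
move=> le_Ns x y /andP[le_x fx_neq0] /andP[le_y fy_neq0].
rewrite /supp (leq_trans le_x (leq_addr _ _)) /=.
exact: (f_add_neq0 (beta_shift_rel le_Ns le_Ns)).
Qed.

Lemma supp0 s : (N <= s)%N -> ~~ supp s 0%N.
Proof.
move=> le_Ns; apply/andP => -[/[!leqn0] /eqP supp_lb0].
by rewrite (f0_eq0 (beta_shift_rel le_Ns le_Ns)) ?eqxx.
Qed.

Lemma supp_dvdn s0 a0 : (N <= s0)%N -> supp s0 a0 ->
  exists2 D, (0 < D)%N & forall s a, (N <= s)%N -> supp s a ->
    forall w, (supp_lb s <= w)%N -> supp s w = (D %| w)%N.
Proof.
have periodic s a : (N <= s)%N -> supp s a ->
    exists2 D, (0 < D)%N & forall w, (supp_lb s <= w)%N -> supp s w = (D %| w)%N.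
  move=> le_Ns suppa.
  exact: periodic_support (supp_add le_Ns) (supp_subl le_Ns le_Ns) (supp0 le_Ns) _ suppa.
move=> le_Ns0 supp0a0; have [D0 D0_gt0 supp0E] := periodic _ _ le_Ns0 supp0a0.
exists D0 => // s a le_Ns suppa; have [D D_gt0 suppE] := periodic _ _ le_Ns suppa.
have D_D0 := support_period_dvdn D0_gt0 D_gt0 supp0E suppE (supp_subl le_Ns0 le_Ns).
have D0_D := support_period_dvdn D_gt0 D0_gt0 suppE supp0E (supp_subl le_Ns le_Ns0).
by have /eqP <- : D == D0 by rewrite eqn_dvd D_D0 D0_D.
Qed.

Lemma natr_mul_beta_shift_const s u v : (N <= s)%N -> supp s u -> supp s v ->
  u%:R * beta_shift s u = v%:R * beta_shift s v.
Proof.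
move=> le_Ns /andP[le_u fu_neq0] /andP[le_v fv_neq0].
exact: (natr_mul_f_const (beta_shift_rel le_Ns le_Ns)).
Qed.

Lemma beta_eq0_supp_lb0 s t : (N <= s)%N -> supp_lb s = 0%N -> (tau s <= t)%N ->
  beta s t = 0.
Proof.
move=> le_Ns supp_lb0 le_t; apply/eqP; apply: contraT => beta_neq0.
have supp_t : supp s (t + d s)%N by rewrite supp_addn_d.
have := supp_subl le_Ns le_Ns supp_t (_ : supp_lb s <= 0)%N.
by rewrite supp_lb0 addn0 (negbTE (supp0 le_Ns)) => /(_ isT supp_t).
Qed.

Section Progression.

Variable D : nat.
Hypotheses (D_gt0 : (0 < D)%N) (suppE : forall s a, (N <= s)%N -> supp s a ->
  forall w, (supp_lb s <= w)%N -> supp s w = (D %| w)%N).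

Definition supp_start s := roundup D (supp_lb s).

Definition beta_start s := (supp_start s - d s)%N.

Definition nonzero_index : pred nat := fun s => (N <= s)%N && supp s (supp_start s).

Lemma mem_nonzero_index s a : (N <= s)%N -> supp s a -> s \in nonzero_index.
Proof.
move=> le_Ns suppa; rewrite unfold_in /nonzero_index le_Ns.
by rewrite (suppE le_Ns suppa) ?leq_roundup ?dvdn_roundup.
Qed.

Lemma supp_nonzero_index s w : s \in nonzero_index -> (supp_lb s <= w)%N ->
  supp s w = (D %| w)%N.
Proof. by case/andP => le_Ns /(suppE le_Ns); apply. Qed.

Lemma beta_start_addn_d s : (beta_start s + d s)%N = supp_start s.
Proof. by rewrite subnK // (leq_trans (leq_addl _ _) (leq_roundup _ D_gt0)). Qed.

Lemma nonzero_index_spec i : i \in nonzero_index ->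
  [/\ (N <= i)%N, beta i (beta_start i) != 0,
      (tau i <= beta_start i)%N /\ (beta_start i - tau i < D)%N,
      (D <= beta_start i + d i)%N
    & (D %| beta_start i + d i)%N].
Proof.
move=> /andP[le_Ns supp_start_i]; rewrite beta_start_addn_d.
have le_lb_start : (supp_lb i <= supp_start i)%N := leq_roundup _ D_gt0.
have lt_start : (supp_start i < supp_lb i + D)%N := roundup_ltn _ D_gt0.
have le_tau_start : (tau i <= beta_start i)%N.
  by move: le_lb_start; rewrite /beta_start /supp_lb; lia.
split => //.
- by rewrite -supp_addn_d // beta_start_addn_d.
- by split => //; move: lt_start; rewrite /beta_start /supp_lb; lia.
- by rewrite dvdn_leq ?dvdn_roundup ?(mem_gt0 (supp0 le_Ns) supp_start_i).
- exact: dvdn_roundup.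
Qed.

Lemma beta_off_progression s t : (N <= s)%N -> (tau s <= t)%N ->
  ~ (s \in nonzero_index /\ exists l, t = (beta_start s + D * l)%N) -> beta s t = 0.
Proof.
move=> le_Ns le_t not_prog; case: (eqVneq (beta s t) 0) => // beta_neq0.
exfalso; apply: not_prog; have supp_t : supp s (t + d s)%N by rewrite supp_addn_d.
have Is := mem_nonzero_index le_Ns supp_t; split => //.
have le_lb_t : (supp_lb s <= t + d s)%N by rewrite /supp_lb leq_add2r.
have D_t : (D %| t + d s)%N by rewrite -(supp_nonzero_index Is).
have [l def_t] := roundup_progression D_gt0 le_lb_t D_t.
by exists l; move: def_t (beta_start_addn_d s); rewrite /supp_start; lia.
Qed.

Hypothesis char0 : [pchar F] =i pred0.

Lemma beta_progression s l : s \in nonzero_index ->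
  beta s (beta_start s + D * l)%N =
    (beta_start s + d s)%:R * beta s (beta_start s) / (beta_start s + d s + D * l)%:R.
Proof.
move=> /[dup] Is /andP[le_Ns supp_start_s]; rewrite beta_start_addn_d.
pose w := (supp_start s + D * l)%N.
have supp_w : supp s w.
  rewrite (supp_nonzero_index Is) ?dvdn_add ?dvdn_roundup ?dvdn_mulr //.
  exact: leq_trans (leq_roundup _ D_gt0) (leq_addr _ _).
have w_neq0 : w%:R != 0 :> F.
  by rewrite ((pcharf0P F).1 char0) -lt0n (mem_gt0 (supp0 le_Ns) supp_w).
have -> : (beta_start s + D * l = w - d s)%N.
  by rewrite /w -beta_start_addn_d addnAC addnK.
change (beta_shift s w = (supp_start s)%:R * beta_shift s (supp_start s) / w%:R).
by rewrite (natr_mul_beta_shift_const le_Ns supp_start_s supp_w) mulrAC divff ?mul1r.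
Qed.

End Progression.

End ShiftedRelation.

Theorem lemma2p5 (F : fieldType) (hF : [pchar F] =i pred0)
  (N : nat) (d tau : nat -> nat) (beta : nat -> nat -> F)
  (hrel : forall n s m t : nat, (N <= n)%N -> (N <= s)%N ->
     (tau n <= m)%N -> (tau s <= t)%N ->
     beta n m * beta s t =
       beta n m * beta s (m + t + d n)%N + beta s t * beta n (m + t + d s)%N) :
  ((forall s t : nat, (N <= s)%N -> (tau s <= t)%N -> beta s t = 0)
   \/
   (exists (I : pred nat) (Delta : nat) (k : nat -> nat),
      (forall i, i \in I ->
         [/\ (N <= i)%N, beta i (k i) != 0,
             (tau i <= k i)%N /\ (k i - tau i < Delta)%N,
             (Delta <= k i + d i)%N
           & (Delta %| k i + d i)%N]) /\
      (forall s t : nat, (N <= s)%N -> (tau s <= t)%N ->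
         (forall l : nat, s \in I -> t = (k s + Delta * l)%N ->
            beta s t = (k s + d s)%:R * beta s (k s) / (k s + d s + Delta * l)%:R)
         /\
         (~ (s \in I /\ exists l : nat, t = (k s + Delta * l)%N) -> beta s t = 0))))
  /\
  ((forall s, d s = 0%N /\ tau s = 0%N) ->
     forall s t : nat, (N <= s)%N -> (tau s <= t)%N -> beta s t = 0).
Proof.
split; last first.
  move=> dtau0 s t le_Ns; apply: (beta_eq0_supp_lb0 hrel le_Ns).
  by rewrite /supp_lb; case: (dtau0 s) => -> ->.
case: (classic (exists s a, (N <= s)%N /\ supp d tau beta s a)) => [|no_supp].
- move=> [s0 [a0 [le_Ns0 supp_a0]]]; right.
  have [D D_gt0 suppE] := supp_dvdn hrel le_Ns0 supp_a0.
  exists (nonzero_index N d tau beta D), D, (beta_start d tau D); split.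
    by move=> i /(nonzero_index_spec hrel D_gt0).
  move=> s t le_Ns le_t; split; last exact: (beta_off_progression D_gt0 suppE le_Ns le_t).
  by move=> l Is ->; rewrite (beta_progression hrel D_gt0 suppE hF l Is).
- left => s t le_Ns le_t; apply/eqP; apply: contra_notT no_supp => beta_neq0.
  by exists s, (t + d s)%N; rewrite supp_addn_d.
Qed.
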